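(* Let $k$ be a field of characteristic zero and $n\geq 1$. Let $N$ be a normal subgroup of $GA_n$ containing all diagonal automorphisms of $k^n$. Then every tame automorphism of $k^n$ belongs to $N$.
   Context: $GA_n$ is the group (under composition) of polynomial automorphisms $G=(G_1,\dots,G_n)$ of $k^n$, $G_i\in k[X_1,\dots,X_n]$. An automorphism $G$ is diagonal if $G_i=c_iX_i$ with $c_i\in k\setminus\{0\}$ for all $i$; affine if $G_i=\sum_{j}a_{ij}X_j+b_i$ with $a_{ij},b_i\in k$; elementary if for some $i$, $G_i=X_i+g$ with $g\in k[X_1,\dots,X_{i-1},X_{i+1},\dots,X_n]$ and $G_j=X_j$ for $j\neq i$; tame if it is a finite composition of affine and elementary automorphisms. *)

From HB Require Import structures.
From mathcomp Require Import all_boot all_order all_algebra.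
From mathcomp Require Import mpoly.
Set Implicit Arguments. Unset Strict Implicit. Unset Printing Implicit Defensive.
Import GRing.Theory.
Local Open Scope ring_scope.

Definition polymap (k : fieldType) (n : nat) := n.-tuple {mpoly k[n]}.

Definition pm_id (k : fieldType) (n : nat) : polymap k n := [tuple 'X_i | i < n].

Definition pm_comp (k : fieldType) (n : nat) (G H : polymap k n) : polymap k n :=
  [tuple (tnth G i) \mPo H | i < n].

Definition pm_inverse (k : fieldType) (n : nat) (G H : polymap k n) : Prop :=
  pm_comp G H = pm_id k n /\ pm_comp H G = pm_id k n.

Definition is_aut (k : fieldType) (n : nat) (G : polymap k n) : Prop :=
  exists H, pm_inverse G H.

Definition is_diagonal (k : fieldType) (n : nat) (G : polymap k n) : Prop :=
  exists c : 'I_n -> k, (forall i, c i != 0) /\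
    forall i, tnth G i = c i *: 'X_i.

Definition is_affine (k : fieldType) (n : nat) (G : polymap k n) : Prop :=
  is_aut G /\
  exists (a : 'M[k]_n) (b : 'I_n -> k),
    forall i, tnth G i = \sum_(j < n) a i j *: 'X_j + (b i)%:MP.

Definition free_of_var (k : fieldType) (n : nat) (i : 'I_n) (g : {mpoly k[n]}) : Prop :=
  forall m, m \in msupp g -> m i = 0%N.

Definition is_elementary (k : fieldType) (n : nat) (G : polymap k n) : Prop :=
  exists (i : 'I_n) (g : {mpoly k[n]}), free_of_var i g /\
    tnth G i = 'X_i + g /\ forall j, j != i -> tnth G j = 'X_j.

Inductive is_tame (k : fieldType) (n : nat) : polymap k n -> Prop :=
| tame_affine G : is_affine G -> is_tame G
| tame_elementary G : is_elementary G -> is_tame G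
| tame_comp G H : is_tame G -> is_tame H -> is_tame (pm_comp G H).

Definition is_subgroup_GA (k : fieldType) (n : nat) (N : polymap k n -> Prop) : Prop :=
  [/\ forall G, N G -> is_aut G,
      N (pm_id k n),
      forall G H, N G -> N H -> N (pm_comp G H)
    & forall G H, N G -> pm_inverse G H -> N H].

Definition is_normal_subgroup_GA (k : fieldType) (n : nat) (N : polymap k n -> Prop) : Prop :=
  is_subgroup_GA N /\
  forall F G Ginv, N F -> pm_inverse G Ginv -> N (pm_comp (pm_comp G F) Ginv).

From mathcomp Require Import all_boot all_order all_algebra.
From mathcomp Require Import mpoly zify.
Import GRing.Theory.
Local Open Scope ring_scope.
Set Implicit Arguments. Unset Strict Implicit.

(* Conjugating the scaling x_i |-> c x_i by the elementary map x_i |-> x_i + g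
   and then undoing the scaling gives x_i |-> x_i + (1 - c) g; so as soon as
   c <> 0, 1 (e.g. c = 2 in characteristic zero) every elementary map, and
   likewise every translation, lies in N.  Gaussian elimination writes an
   invertible linear map as a product of maps changing a single coordinate
   x_K into a linear form with nonzero x_K-coefficient; such a map is an
   elementary map composed with a diagonal one.  Hence N contains all affine
   and all elementary automorphisms, hence all tame ones. *)

Section RowOperations.
Variables (k : fieldType) (n : nat).
Implicit Types (A : 'M[k]_n) (u v w : 'rV[k]_n) (K p : 'I_n).

Definition row_op_mx K v : 'M[k]_n := \matrix_i (if i == K then v else 'e_i).

Lemma row_op_mxE K v p j :
  row_op_mx K v p j = if p == K then v 0 j else (p == j)%:R.
Proof. by rewrite mxE; case: ifP => // _; rewrite mxE eq_sym. Qed.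

Lemma row_row_op_mx K v p : row p (row_op_mx K v) = if p == K then v else 'e_p.
Proof. by rewrite rowK. Qed.

Lemma row_mul_row_op_mx K v A p :
  row p (row_op_mx K v *m A) = if p == K then v *m A else row p A.
Proof. by rewrite row_mul row_row_op_mx; case: ifP; rewrite // -rowE. Qed.

Lemma mulmx_row_op_mx w K v : w *m row_op_mx K v = w + w 0 K *: (v - 'e_K).
Proof.
have wE : w = \sum_p w 0 p *: 'e_p.
  by rewrite -{1}[w]mulmx1 mulmx_sum_row; under eq_bigr do rewrite row1.
rewrite mulmx_sum_row {2}wE (bigD1 K) // [X in _ = X + _](bigD1 K) //=.
rewrite row_row_op_mx eqxx scalerBr [RHS]addrC addrA subrK; congr (_ + _).
by apply: eq_bigr => p /negPf pK; rewrite row_row_op_mx pK.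
Qed.

Lemma row_op_mx_id K : row_op_mx K 'e_K = 1%:M.
Proof.
by apply/row_matrixP => p; rewrite row_row_op_mx row1; case: eqP => [->|].
Qed.

Lemma mul_row_op_mx K w v :
  row_op_mx K w *m row_op_mx K v = row_op_mx K (w *m row_op_mx K v).
Proof.
apply/row_matrixP => p; rewrite row_mul_row_op_mx !row_row_op_mx.
by case: eqP => // /eqP /negPf pK; rewrite pK.
Qed.

Lemma row_op_mxV K v : v 0 K != 0 ->
  exists2 w : 'rV[k]_n, w 0 K != 0 & row_op_mx K w *m row_op_mx K v = 1%:M.
Proof.
move=> vK; pose w : 'rV[k]_n := 'e_K - (v 0 K)^-1 *: (v - 'e_K).
have wK : w 0 K = (v 0 K)^-1.
  by rewrite !mxE !eqxx /= mulrBr mulVf // mulr1 subKr.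
exists w; first by rewrite wK invr_eq0.
by rewrite mul_row_op_mx mulmx_row_op_mx wK subrK row_op_mx_id.
Qed.

Lemma row_op_mx_unit K v : v 0 K != 0 -> row_op_mx K v \in unitmx.
Proof. by case/row_op_mxV=> w _ /mulmx1_unit []. Qed.

Definition id_rows (kk : nat) A := forall p, (p < kk)%N -> row p A = 'e_p.

Lemma id_rows_full kk A : (n <= kk)%N -> id_rows kk A -> A = 1%:M.
Proof.
by move=> nk hA; apply/row_matrixP => p; rewrite row1 hA // (leq_trans _ nk).
Qed.

Lemma id_rows_clear K u A :
  id_rows K A -> u *m A = 'e_K -> id_rows K.+1 (row_op_mx K u *m A).
Proof.
move=> hA uA p; rewrite row_mul_row_op_mx ltnS leq_eqVlt.
case: (eqVneq p K) => [-> _|pK /= pK'] //; apply: hA.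
by move: pK'; rewrite val_eqE (negPf pK).
Qed.

(* If the K-th coordinate of u vanishes, adding row K to a later row j with
   u_j <> 0 lets u + e_K play the role of u, now with a nonzero pivot. *)
Lemma id_rows_pivot K u A :
  id_rows K A -> u *m A = 'e_K -> u 0 K = 0 ->
  exists j v u', [/\ v 0 j != 0, id_rows K (row_op_mx j v *m A),
                     u' 0 K != 0 & u' *m (row_op_mx j v *m A) = 'e_K].
Proof.
move=> hA uA uK.
have [j /andP [Kj uj]] : exists j : 'I_n, (K < j)%N && (u 0 j != 0).
  apply/existsP; apply: contraT => /existsPn u0.
  have := congr1 (fun w : 'rV_n => w 0 K) uA; rewrite !mxE !eqxx /=.
  rewrite big1 => [/eqP|l _]; first by rewrite eq_sym oner_eq0.
  case: (ltngtP l K) => [lK|Kl|/val_inj ->]; last by rewrite uK mul0r.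
    have := congr1 (fun w : 'rV_n => w 0 K) (hA l lK); rewrite !mxE => ->.
    by rewrite eqxx -val_eqE /= (gtn_eqF lK) mulr0.
  by move: (u0 l); rewrite Kl /= negbK => /eqP ->; rewrite mul0r.
have jK : (j == K) = false by apply/negbTE; rewrite neq_ltn Kj orbT.
pose v : 'rV[k]_n := 'e_j - (u 0 j)^-1 *: 'e_K.
exists j, v, (u + 'e_K); split.
- by rewrite !mxE !eqxx jK mulr0 subr0 oner_eq0.
- move=> p pK; rewrite row_mul_row_op_mx ifF ?hA //.
  by apply: contraTF pK => /eqP ->; rewrite -leqNgt ltnW.
- by rewrite !mxE !eqxx uK add0r oner_eq0.
have vj : v - 'e_j = - ((u 0 j)^-1 *: 'e_K) by rewrite addrAC subrr add0r.
rewrite mulmxA mulmx_row_op_mx vj !mxE !eqxx jK /= addr0.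
by rewrite scalerN scalerA mulfV // scale1r addrK.
Qed.

Section RowOpInduction.
Variable P : 'M[k]_n -> Prop.
Hypothesis P1 : P 1%:M.
Hypothesis PM : forall A B, P A -> P B -> P (A *m B).
Hypothesis Prow_op : forall K v, v 0 K != 0 -> P (row_op_mx K v).

Lemma P_row_op_mxl K v A : v 0 K != 0 -> P (row_op_mx K v *m A) -> P A.
Proof.
case/row_op_mxV=> w wK wv PvA; rewrite -[A]mul1mx -wv -mulmxA.
exact: PM (Prow_op wK) PvA.
Qed.

Lemma id_rows_ind m kk A :
  (n - kk <= m)%N -> A \in unitmx -> id_rows kk A -> P A.
Proof.
elim: m kk A => [|m IH] kk A le_m uA hA; have [kn|nk] := ltnP kk n;
  try by rewrite (id_rows_full nk hA).
  by move: le_m; rewrite leqn0 subn_eq0 leqNgt kn.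
pose K := Ordinal kn.
have eliminate B u :
    B \in unitmx -> id_rows K B -> u *m B = 'e_K -> u 0 K != 0 -> P B.
  move=> uB hB uB_K uK; apply: (P_row_op_mxl uK); apply: (IH K.+1).
  - by rewrite /=; lia.
  - by rewrite unitmx_mul row_op_mx_unit.
  - exact: id_rows_clear.
have uA_K : row K (invmx A) *m A = 'e_K by rewrite -row_mul mulVmx // row1.
have [uK|] := eqVneq (row K (invmx A) 0 K) 0; last exact: eliminate uA_K.
have [j [v [u [vj hvA uK' uvA]]]] := id_rows_pivot (hA : id_rows K A) uA_K uK.
apply: (P_row_op_mxl vj); apply: eliminate uvA uK' => //.
by rewrite unitmx_mul row_op_mx_unit.
Qed.

Lemma unitmx_row_op_ind A : A \in unitmx -> P A.
Proof. by move=> uA; apply: (@id_rows_ind n 0) => //; rewrite subn0. Qed.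
End RowOpInduction.
End RowOperations.

Section PolynomialMaps.
Variables (k : fieldType) (n : nat).
Implicit Types (i j : 'I_n) (c d : k) (g h : {mpoly k[n]}).

Lemma free_of_varP i g :
  free_of_var i g <-> (forall m : 'X_{1..n}, m i != 0%N -> g@_m = 0).
Proof.
split=> [gi m mi|gi m]; last first.
  by rewrite mcoeff_msupp; apply: contraNeq => /gi ->.
by apply/eqP; rewrite -[_ == 0]negbK -mcoeff_msupp; apply: contra mi => /gi ->.
Qed.

Lemma free_of_varZ i c g : free_of_var i g -> free_of_var i (c *: g).
Proof.
move/free_of_varP=> gi; apply/free_of_varP => m /gi.
by rewrite mcoeffZ => ->; rewrite mulr0.
Qed.

Lemma free_of_var_linear i (w : 'I_n -> k) :
  w i = 0 -> free_of_var i (\sum_j w j *: 'X_j).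
Proof.
move=> wi; apply/free_of_varP => m mi; rewrite raddf_sum /=; apply: big1 => j _.
rewrite mcoeffZ mcoeffX; case: (eqVneq j i) => [->|ji]; first by rewrite wi mul0r.
case: eqP => [mj|_]; last by rewrite mulr0.
by rewrite -mj mnm1E eq_sym (negPf ji) in mi.
Qed.

Lemma comp_mpoly_free_of_var i g (t : n.-tuple {mpoly k[n]}) :
  free_of_var i g -> (forall j, j != i -> tnth t j = 'X_j) -> g \mPo t = g.
Proof.
move=> gi tX; rewrite comp_mpolyEX [RHS]mpolyE; apply: eq_big_seq => m gm.
rewrite comp_mpolyX mpolyXE_id; congr (_ *: _); apply: eq_bigr => j _.
by case: (eqVneq j i) => [->|/tX ->]; rewrite ?(gi m gm) ?expr0.
Qed.

Definition pm_elem i c g : polymap k n :=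
  [tuple if j == i then c *: 'X_i + g else 'X_j | j < n].

Lemma tnth_pm_elem i c g j :
  tnth (pm_elem i c g) j = if j == i then c *: 'X_i + g else 'X_j.
Proof. by rewrite tnth_map tnth_ord_tuple. Qed.

Lemma pm_comp_elem i c d g h : free_of_var i g ->
  pm_comp (pm_elem i c g) (pm_elem i d h) = pm_elem i (c * d) (c *: h + g).
Proof.
move=> gi; apply: eq_from_tnth => j; rewrite tnth_map tnth_ord_tuple !tnth_pm_elem.
have elemX l : l != i -> tnth (pm_elem i d h) l = 'X_l.
  by move=> /negPf li; rewrite tnth_pm_elem li.
case: ifP => ji; last by rewrite comp_mpolyXU -tnth_nth tnth_pm_elem ji.
rewrite comp_mpolyD comp_mpolyZ comp_mpolyXU -tnth_nth tnth_pm_elem eqxx.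
by rewrite (comp_mpoly_free_of_var gi elemX) scalerDr scalerA addrA.
Qed.

Lemma pm_elem_id i : pm_elem i 1 0 = pm_id k n.
Proof.
apply: eq_from_tnth => j; rewrite tnth_pm_elem tnth_map tnth_ord_tuple.
by case: eqP => [->|]; rewrite ?scale1r ?addr0.
Qed.

Lemma pm_inverse_elem i g :
  free_of_var i g -> pm_inverse (pm_elem i 1 g) (pm_elem i 1 (- g)).
Proof.
move=> gi; have gNi : free_of_var i (- g) by rewrite -scaleN1r; apply: free_of_varZ.
by split; rewrite pm_comp_elem // mul1r scale1r ?addNr ?addrN pm_elem_id.
Qed.

Lemma pm_elem_diagonal i c : c != 0 -> is_diagonal (pm_elem i c 0).
Proof.
move=> c0; exists (fun j => if j == i then c else 1); split=> j.
  by case: ifP; rewrite ?oner_neq0.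
by rewrite tnth_pm_elem; case: eqP => [->|]; rewrite ?addr0 ?scale1r.
Qed.

Lemma elementary_pm_elem (F : polymap k n) :
  is_elementary F -> exists i g, free_of_var i g /\ F = pm_elem i 1 g.
Proof.
case=> i [g [gi [Fi FX]]]; exists i, g; split=> //.
apply: eq_from_tnth => j; rewrite tnth_pm_elem.
by case: eqP => [->|/eqP /FX //]; rewrite Fi scale1r.
Qed.

Definition pm_affine (A : 'M[k]_n) (b : 'cV[k]_n) : polymap k n :=
  [tuple \sum_j A i j *: 'X_j + (b i 0)%:MP | i < n].

Lemma tnth_pm_affine A b i :
  tnth (pm_affine A b) i = \sum_j A i j *: 'X_j + (b i 0)%:MP.
Proof. by rewrite tnth_map tnth_ord_tuple. Qed.

Lemma comp_mpoly_affine (w : 'I_n -> k) c (t : n.-tuple {mpoly k[n]}) :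
  (\sum_j w j *: 'X_j + c%:MP) \mPo t = \sum_j w j *: tnth t j + c%:MP.
Proof.
rewrite comp_mpolyD comp_mpolyC raddf_sum /=; congr (_ + _).
by apply: eq_bigr => j _; rewrite comp_mpolyZ comp_mpolyXU -tnth_nth.
Qed.

Lemma pm_comp_affine A b B (e : 'cV[k]_n) :
  pm_comp (pm_affine A b) (pm_affine B e) = pm_affine (A *m B) (A *m e + b).
Proof.
apply: eq_from_tnth => i; rewrite tnth_map tnth_ord_tuple !tnth_pm_affine.
rewrite comp_mpoly_affine [in RHS]mxE rmorphD addrA; congr (_ + _).
under eq_bigr do rewrite tnth_pm_affine scalerDr.
rewrite big_split /=; congr (_ + _).
  under eq_bigr do rewrite scaler_sumr.
  rewrite exchange_big /=; apply: eq_bigr => l _; rewrite mxE scaler_suml.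
  by apply: eq_bigr => j _; rewrite scalerA.
rewrite mxE raddf_sum /=; apply: eq_bigr => j _.
by rewrite -mul_mpolyC -rmorphM.
Qed.

Lemma pm_affine_scalar_diagonal c : c != 0 -> is_diagonal (pm_affine c%:M 0).
Proof.
move=> c0; exists (fun=> c); split=> // i.
rewrite tnth_pm_affine mxE mpolyC0 addr0 (bigD1 i) //= mxE eqxx mulr1n.
by rewrite big1 ?addr0 // => j /negPf ji; rewrite mxE eq_sym ji mulr0n scale0r.
Qed.

Lemma pm_affine_row_op K (v : 'rV[k]_n) : pm_affine (row_op_mx K v) 0 =
  pm_elem K (v 0 K) (\sum_j (if j == K then 0 else v 0 j) *: 'X_j).
Proof.
apply: eq_from_tnth => i; rewrite tnth_pm_affine tnth_pm_elem mxE mpolyC0 addr0.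
have [->|iK] := eqVneq i K.
  rewrite (bigD1 K) //= [X in _ = _ + X](bigD1 K) //= eqxx scale0r add0r.
  rewrite row_op_mxE eqxx; congr (_ + _).
  by apply: eq_bigr => j /negPf jK; rewrite row_op_mxE eqxx jK.
rewrite (bigD1 i) //= row_op_mxE (negPf iK) eqxx scale1r big1 ?addr0 // => j ji.
by rewrite row_op_mxE (negPf iK) eq_sym (negPf ji) scale0r.
Qed.

Lemma pm_affine_id : pm_affine 1%:M 0 = pm_id k n.
Proof.
apply: eq_from_tnth => i; rewrite tnth_pm_affine tnth_map tnth_ord_tuple mxE addr0.
rewrite (bigD1 i) //= big1 ?addr0 => [|j /negPf ji].
  by rewrite mxE eqxx scale1r.
by rewrite mxE eq_sym ji scale0r.
Qed.

Lemma pm_inverse_translation (b : 'cV[k]_n) :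
  pm_inverse (pm_affine 1%:M b) (pm_affine 1%:M (- b)).
Proof.
by split; rewrite pm_comp_affine mulmx1 mul1mx ?addNr ?addrN pm_affine_id.
Qed.

Lemma is_affine_unitmx (F : polymap k n) :
  is_affine F -> exists A b, A \in unitmx /\ F = pm_affine A b.
Proof.
case=> [[H [FH _]] [A [b FE]]]; exists A, (\col_i b i); split; last first.
  by apply: eq_from_tnth => i; rewrite tnth_pm_affine FE mxE.
pose C : 'M[k]_n := \matrix_(j, l) (tnth H j)@_U_(l).
suff /mulmx1_unit [] : A *m C = 1%:M by [].
apply/matrixP => i l; have := congr1 (fun G : polymap k n => (tnth G i)@_U_(l)) FH.
rewrite /= !tnth_map !tnth_ord_tuple FE comp_mpoly_affine mcoeffXU mcoeffD.
rewrite mcoeffC mnm1_eq0 mulr0 addr0 raddf_sum /= !mxE => <-.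
by apply: eq_bigr => j _; rewrite mcoeffZ mxE.
Qed.
End PolynomialMaps.

Section NormalSubgroup.
Variables (k : fieldType) (n : nat) (N : polymap k n -> Prop) (c : k).
Hypothesis N_normal : is_normal_subgroup_GA N.
Hypothesis N_diagonal : forall D, is_diagonal D -> N D.
Hypotheses (c_neq0 : c != 0) (c_neq1 : c != 1).

Lemma N_comp F G : N F -> N G -> N (pm_comp F G).
Proof. by case: N_normal => [[_ _ NM _] _]; apply: NM. Qed.

Lemma N_conj F G Ginv : N F -> pm_inverse G Ginv -> N (pm_comp (pm_comp G F) Ginv).
Proof. by case: N_normal => _; apply. Qed.

(* Conjugating the scaling by c with the shift by (1 - c)^-1 x leaves the
   shift by x. *)
Lemma conj_scaling_shift (V : lmodType k) (x : V) :
  c *: - ((1 - c)^-1 *: x) + (1 - c)^-1 *: x = x.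
Proof.
rewrite scalerN addrC -{1}[_ *: x]scale1r -scalerBl scalerA mulfV ?scale1r //.
by rewrite subr_eq0 eq_sym.
Qed.

Lemma N_pm_elem1 i g : free_of_var i g -> N (pm_elem i 1 g).
Proof.
move=> gi; have gi' : free_of_var i ((1 - c)^-1 *: g) by apply: free_of_varZ.
have := N_conj (N_diagonal (pm_elem_diagonal i c_neq0)) (pm_inverse_elem gi').
rewrite pm_comp_elem // mul1r scaler0 add0r pm_comp_elem // mulr1.
rewrite conj_scaling_shift.
move/N_comp/(_ (N_diagonal (pm_elem_diagonal i (invr_neq0 c_neq0)))).
by rewrite pm_comp_elem // mulfV // scaler0 add0r.
Qed.

Lemma N_pm_elem i d g : d != 0 -> free_of_var i g -> N (pm_elem i d g).
Proof.
move=> d0 gi; have := N_comp (N_pm_elem1 gi) (N_diagonal (pm_elem_diagonal i d0)).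
by rewrite pm_comp_elem // mul1r scale1r add0r.
Qed.

Lemma N_elementary F : is_elementary F -> N F.
Proof. by case/elementary_pm_elem=> i [g [gi ->]]; apply: N_pm_elem1. Qed.

Lemma N_linear A : A \in unitmx -> N (pm_affine A 0).
Proof.
apply: (@unitmx_row_op_ind _ _ (fun A => N (pm_affine A 0))) => [|B C NB NC|K v vK].
- by rewrite pm_affine_id; case: N_normal => [[]].
- by have := N_comp NB NC; rewrite pm_comp_affine mulmx0 add0r.
rewrite pm_affine_row_op; apply: N_pm_elem => //.
by apply: free_of_var_linear; rewrite eqxx.
Qed.

Lemma N_translation (b : 'cV[k]_n) : N (pm_affine 1%:M b).
Proof.
have := N_conj (N_diagonal (pm_affine_scalar_diagonal n c_neq0))
               (pm_inverse_translation ((1 - c)^-1 *: b)).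
move/N_comp/(_ (N_diagonal (pm_affine_scalar_diagonal n (invr_neq0 c_neq0)))).
rewrite !pm_comp_affine !mul1mx !mulmx1 !mulmx0 !add0r !mul_scalar_mx.
rewrite conj_scaling_shift.
by rewrite -[(c^-1)%:M]scalemx1 scalerA mulfV // scale1r.
Qed.

Lemma N_affine F : is_affine F -> N F.
Proof.
case/is_affine_unitmx=> A [b [uA ->]].
have := N_comp (N_translation b) (N_linear uA).
by rewrite pm_comp_affine mul1mx mulmx0 add0r.
Qed.

Lemma N_tame F : is_tame F -> N F.
Proof. by elim=> [G /N_affine|G /N_elementary|G H _ NG _ NH] //; apply: N_comp. Qed.
End NormalSubgroup.

Theorem mainTheorem2 (k : fieldType) (n : nat) :
  [pchar k] =i pred0 -> (0 < n)%N ->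
  forall N : polymap k n -> Prop,
    is_normal_subgroup_GA N ->
    (forall D : polymap k n, is_diagonal D -> N D) ->
    forall F : polymap k n, is_tame F -> N F.
Proof.
move=> /pcharf0P char0 _ N N_normal N_diagonal.
apply: (@N_tame _ _ _ 2%:R) => //; first by rewrite char0.
by rewrite mulr2n -subr_eq0 addrK oner_eq0.
Qed.
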